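(* Let $\lambda\in ba(\mathcal A)$ and let $\mathscr M\subset ba(\mathcal A)_+$ be convex and weak$^*$ compact. Then $\lambda\perp\mu$ for every $\mu\in\mathscr M$ if and only if $\lambda\perp_u\mathscr M$, i.e. for every $\varepsilon>0$ there is $A\in\mathcal A$ with $\sup_{\mu\in\mathscr M}|\mu|(A)+|\lambda|(A^c)<\varepsilon$.
   Context: $\mathcal A$ is an algebra of subsets of a set $\Omega$, $ba(\mathcal A)$ the space of bounded finitely additive real set functions on $\mathcal A$, $ba(\mathcal A)_+$ its nonnegative elements, $|\mu|$ total variation. $\mu\perp\lambda$ means: for every $\varepsilon>0$ there is $A\in\mathcal A$ with $|\mu|(A)+|\lambda|(A^c)<\varepsilon$. The weak$^*$ topology on $ba(\mathcal A)$ is that of pointwise convergence on $\mathcal A$-simple functions, $\mu\mapsto\mu(f)=\int f\,d\mu$ (i.e. $ba(\mathcal A)$ viewed as the dual of the space of uniform limits of simple functions). *)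

From Stdlib Require Import Reals Lra List Classical ClassicalEpsilon.
Import ListNotations.
Open Scope R_scope.

Section BA.
Context {Omega : Type}.

Definition compl (B : Omega -> Prop) : Omega -> Prop := fun x => ~ B x.
Definition disj (B C : Omega -> Prop) : Prop := forall x, ~ (B x /\ C x).

Definition is_algebra (A : (Omega -> Prop) -> Prop) : Prop :=
  A (fun _ => False) /\
  (forall B, A B -> A (compl B)) /\
  (forall B C, A B -> A C -> A (fun x => B x \/ C x)).

(** Supremum of a set of reals (classical); 0 when there is no least upper
    bound (e.g. the empty set). *)
Definition Rsup (S : R -> Prop) : R :=
  epsilon (inhabits 0)
    (fun v => is_lub S v \/ (~ (exists w, is_lub S w) /\ v = 0)).

(** Elements of ba(A): bounded finitely additive real set functions on A,
    represented as functions on all subsets vanishing outside A. *)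
Definition is_ba (A : (Omega -> Prop) -> Prop) (mu : (Omega -> Prop) -> R) : Prop :=
  (forall B, ~ A B -> mu B = 0) /\
  (forall B C, A B -> A C -> disj B C ->
       mu (fun x => B x \/ C x) = mu B + mu C) /\
  (exists K, forall B, A B -> Rabs (mu B) <= K).

Definition is_ba_pos (A : (Omega -> Prop) -> Prop) (mu : (Omega -> Prop) -> R) : Prop :=
  is_ba A mu /\ forall B, A B -> 0 <= mu B.

Definition is_A_partition (A : (Omega -> Prop) -> Prop)
    (B : Omega -> Prop) (l : list (Omega -> Prop)) : Prop :=
  (forall C, In C l -> A C) /\
  ForallOrdPairs disj l /\
  (forall x, B x <-> exists C, In C l /\ C x).

Definition tv (A : (Omega -> Prop) -> Prop) (mu : (Omega -> Prop) -> R)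
    (B : Omega -> Prop) : R :=
  Rsup (fun r => exists l, is_A_partition A B l /\
          r = fold_right (fun C s => Rabs (mu C) + s) 0 l).

Definition perp (A : (Omega -> Prop) -> Prop) (mu lam : (Omega -> Prop) -> R) : Prop :=
  forall eps, 0 < eps -> exists B, A B /\ tv A mu B + tv A lam (compl B) < eps.

Definition perp_u (A : (Omega -> Prop) -> Prop) (lam : (Omega -> Prop) -> R)
    (M : ((Omega -> Prop) -> R) -> Prop) : Prop :=
  forall eps, 0 < eps -> exists B, A B /\
     Rsup (fun r => exists mu, M mu /\ r = tv A mu B) + tv A lam (compl B) < eps.

(** A-simple functions, given as finite combinations sum c_i 1_{B_i}, B_i in A,
    and their integrals mu(f) = sum c_i mu(B_i). *)
Definition is_simple (A : (Omega -> Prop) -> Prop) (f : list (R * (Omega -> Prop))) : Prop :=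
  forall p, In p f -> A (snd p).
Definition integral (mu : (Omega -> Prop) -> R) (f : list (R * (Omega -> Prop))) : R :=
  fold_right (fun p s => fst p * mu (snd p) + s) 0 f.

Definition weak_open (A : (Omega -> Prop) -> Prop)
    (U : ((Omega -> Prop) -> R) -> Prop) : Prop :=
  forall mu, is_ba A mu -> U mu ->
    exists (fs : list (list (R * (Omega -> Prop)))) (delta : R),
      0 < delta /\ (forall f, In f fs -> is_simple A f) /\
      forall nu, is_ba A nu ->
        (forall f, In f fs -> Rabs (integral nu f - integral mu f) < delta) -> U nu.

Definition weak_compact (A : (Omega -> Prop) -> Prop)
    (M : ((Omega -> Prop) -> R) -> Prop) : Prop :=
  (forall mu, M mu -> is_ba A mu) /\
  forall (I : Type) (U : I -> ((Omega -> Prop) -> R) -> Prop),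
    (forall i, weak_open A (U i)) ->
    (forall mu, M mu -> exists i, U i mu) ->
    exists (l : list I), forall mu, M mu -> exists i, In i l /\ U i mu.

Definition convex (M : ((Omega -> Prop) -> R) -> Prop) : Prop :=
  forall mu nu t, M mu -> M nu -> 0 <= t <= 1 ->
    M (fun B => t * mu B + (1 - t) * nu B).

End BA.

(** Uniform
    singularity [perp_u A lam M] trivially gives [perp A mu lam] for each
    [mu] in [M], because [M] is bounded.  For the converse fix [e > 0]:
    1. each [mu] in [M] lies in a weak* open half-space
       [{nu | nu B + |lam|(B^c) < e}] with [B] in [A]; by compactness finitely
       many sets [B_1 ... B_n] suffice;
    2. the functions [nu |-> nu B_i + |lam|(B_i^c) - e] are affine, so a
       finite minimax lemma for convex sets yields weights [w_i >= 0] summing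
       to 1 with [sum_i w_i (nu B_i + |lam|(B_i^c)) <= e] for all [nu] in [M];
    3. the level set [D = {x | sum_{x in B_i} w_i >= 1/2}] belongs to [A],
       its complement lies in the corresponding level set of the [B_i^c], and
       a Chebyshev inequality for nonnegative additive set functions
       ("contents") gives [nu D + |lam|(D^c) <= 2e] uniformly on [M]. *)

From Stdlib Require Import Reals List Lra Classical ClassicalEpsilon
  FunctionalExtensionality PropExtensionality.
Import ListNotations.
Open Scope R_scope.

Lemma Rsup_cases (S : R -> Prop) :
  is_lub S (Rsup S) \/ (~ (exists w, is_lub S w) /\ Rsup S = 0).
Proof.
  unfold Rsup. apply epsilon_spec.
  destruct (classic (exists w, is_lub S w)) as [[w Hw]|Hn].
  - exists w; left; exact Hw.
  - exists 0; right; auto.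
Qed.

Lemma Rsup_lub (S : R -> Prop) :
  (exists x, S x) -> (exists b, is_upper_bound S b) -> is_lub S (Rsup S).
Proof.
  intros He Hb. destruct (Rsup_cases S) as [H|[Hn _]]; auto.
  exfalso; apply Hn. destruct (completeness S Hb He) as [m Hm]; eauto.
Qed.

Lemma Rsup_ge (S : R -> Prop) x :
  S x -> (exists b, is_upper_bound S b) -> x <= Rsup S.
Proof. intros Hx Hb. apply (Rsup_lub S (ex_intro _ x Hx) Hb), Hx. Qed.

(** A nonnegative upper bound dominates [Rsup], also for the empty set. *)
Lemma Rsup_le (S : R -> Prop) b : (forall x, S x -> x <= b) -> 0 <= b -> Rsup S <= b.
Proof.
  intros H Hb. destruct (Rsup_cases S) as [[_ H2]|[_ ->]]; [|exact Hb].
  apply H2. intros x Hx; apply H, Hx.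
Qed.

Lemma ForallOrdPairs_app {T} (Rel : T -> T -> Prop) l1 l2 :
  ForallOrdPairs Rel l1 -> ForallOrdPairs Rel l2 ->
  (forall a b, In a l1 -> In b l2 -> Rel a b) -> ForallOrdPairs Rel (l1 ++ l2).
Proof.
  induction l1 as [|a l1 IH]; intros H1 H2 H; simpl; auto.
  inversion H1; subst. constructor.
  - apply Forall_app; split; auto.
    rewrite Forall_forall; intros b Hb; apply H; simpl; auto.
  - apply IH; auto. intros; apply H; simpl; auto.
Qed.

Lemma ForallOrdPairs_map {T} (Rel : T -> T -> Prop) f l :
  ForallOrdPairs Rel l -> (forall a b, Rel a b -> Rel (f a) (f b)) ->
  ForallOrdPairs Rel (map f l).
Proof.
  induction l as [|a l IH]; intros H1 H; simpl; constructor; inversion H1; subst; auto.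
  apply Forall_map. eapply Forall_impl; [|eassumption]. auto.
Qed.

Definition total_weight {T} (w : list (R * T)) : R :=
  fold_right (fun p s => fst p + s) 0 w.

(** ** A minimax lemma for affine functions on a convex set

    [T] carries an abstract convex combination [mix t y z] ("t y + (1-t) z");
    no axioms on [mix] are needed beyond those in the hypotheses. *)
Section Minimax.
Variable T : Type.
Variable mix : R -> T -> T -> T.

Definition mix_convex (K : T -> Prop) : Prop :=
  forall y z t, K y -> K z -> 0 <= t <= 1 -> K (mix t y z).

Definition mix_affine (K : T -> Prop) (f : T -> R) : Prop :=
  forall y z t, K y -> K z -> 0 <= t <= 1 -> f (mix t y z) = t * f y + (1 - t) * f z.

Section TwoFunctions.
Variables (K : T -> Prop) (f g : T -> R).
Hypotheses (HK : mix_convex K) (Hf : mix_affine K f) (Hg : mix_affine K g).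
Hypothesis Hcover : forall y, K y -> f y <= 0 \/ g y <= 0.

(** If [f y > 0] and [g z > 0], then a suitable point of the segment [y z]
    would make both positive unless [f y * g z <= f z * g y]. *)
Lemma cross_inequality y z : K y -> K z -> f y > 0 -> g z > 0 -> f y * g z <= f z * g y.
Proof.
  intros Ky Kz Fy Gz.
  destruct (Rle_dec (f y * g z) (f z * g y)) as [ok|nok]; [exact ok|exfalso].
  assert (gy : g y <= 0) by (destruct (Hcover y Ky); lra).
  assert (fz : f z <= 0) by (destruct (Hcover z Kz); lra).
  set (a := f y) in *. set (b := f z) in *. set (c := g y) in *. set (d := g z) in *.
  (* f is positive on the segment for t > lo, g for t < hi, and lo < hi *)
  set (lo := - b / (a - b)). set (hi := d / (d - c)).
  assert (E1 : lo * (a - b) = - b) by (unfold lo; field; lra).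
  assert (E2 : hi * (d - c) = d) by (unfold hi; field; lra).
  assert (E3 : (hi - lo) * ((a - b) * (d - c)) = a * d - b * c).
  { replace ((hi - lo) * ((a - b) * (d - c)))
      with (hi * (d - c) * (a - b) - lo * (a - b) * (d - c)) by ring.
    rewrite E1, E2. ring. }
  assert (PQ : (a - b) * (d - c) > 0) by (apply Rmult_gt_0_compat; lra).
  assert (Hlh : lo < hi) by nra.
  assert (Hlo : 0 <= lo) by nra.
  assert (Hhi : hi <= 1) by nra.
  set (t := (lo + hi) / 2).
  assert (Ht : 0 <= t <= 1) by (unfold t; lra).
  assert (Kw : K (mix t y z)) by (apply HK; auto).
  assert (f (mix t y z) > 0).
  { rewrite Hf by auto. fold a b.
    assert ((t - lo) * (a - b) > 0) by (apply Rmult_gt_0_compat; unfold t; lra). nra. }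
  assert (g (mix t y z) > 0).
  { rewrite Hg by auto. fold c d.
    assert ((hi - t) * (d - c) > 0) by (apply Rmult_gt_0_compat; unfold t; lra). nra. }
  destruct (Hcover _ Kw); lra.
Qed.

Lemma minimax_two : exists t, 0 <= t <= 1 /\ forall y, K y -> t * f y + (1 - t) * g y <= 0.
Proof.
  destruct (classic (exists y, K y /\ f y > 0)) as [[y0 [Ky0 Hy0]]|Hn1].
  2:{ exists 1. split; [lra|]. intros y Ky. destruct (Rle_dec (f y) 0); [lra|].
      exfalso; apply Hn1; exists y; split; auto; lra. }
  destruct (classic (exists z, K z /\ g z > 0)) as [[z0 [Kz0 Hz0]]|Hn2].
  2:{ exists 0. split; [lra|]. intros y Ky. destruct (Rle_dec (g y) 0); [lra|].
      exfalso; apply Hn2; exists y; split; auto; lra. }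
  assert (Fneg : forall z, K z -> g z > 0 -> f z < 0).
  { intros z Kz Gz. destruct (Hcover z Kz) as [h|h]; [|lra].
    destruct (Rle_lt_or_eq_dec _ _ h); auto.
    pose proof (cross_inequality y0 z Ky0 Kz Hy0 Gz). nra. }
  (* the ratios g/(-f) where g > 0 lie below the ratios -g/f where f > 0 *)
  set (Ratios := fun r => exists z, K z /\ g z > 0 /\ r = g z / (- f z)).
  assert (UB : forall y, K y -> f y > 0 -> is_upper_bound Ratios (- g y / f y)).
  { intros y Ky Fy r [z [Kz [Gz ->]]].
    pose proof (cross_inequality y z Ky Kz Fy Gz). pose proof (Fneg z Kz Gz).
    apply Rmult_le_reg_r with (f y * - f z); [nra|].
    replace (g z / - f z * (f y * - f z)) with (g z * f y) by (field; lra).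
    replace (- g y / f y * (f y * - f z)) with (g y * f z) by (field; lra). nra. }
  destruct (completeness Ratios) as [a [Ha1 Ha2]].
  { exists (- g y0 / f y0). apply UB; auto. }
  { exists (g z0 / - f z0), z0; auto. }
  assert (Ha0 : 0 <= a).
  { apply Rle_trans with (g z0 / - f z0); [|apply Ha1; exists z0; auto].
    pose proof (Fneg z0 Kz0 Hz0). apply Rlt_le, Rdiv_lt_0_compat; lra. }
  assert (Key : forall y, K y -> a * f y + g y <= 0).
  { intros y Ky. destruct (Rlt_dec 0 (f y)) as [Fy|Fy].
    - assert (a <= - g y / f y) by (apply Ha2, UB; auto).
      apply Rmult_le_compat_r with (r := f y) in H; [|lra].
      replace (- g y / f y * f y) with (- g y) in H by (field; lra). lra.
    - destruct (Rlt_dec 0 (g y)) as [Gy|Gy]; [|nra].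
      pose proof (Fneg y Ky Gy).
      assert (g y / - f y <= a) by (apply Ha1; exists y; auto).
      apply Rmult_le_compat_r with (r := - f y) in H0; [|lra].
      replace (g y / - f y * - f y) with (g y) in H0 by (field; lra). lra. }
  exists (a / (1 + a)). split.
  - split; [apply Rle_mult_inv_pos; lra|].
    apply Rmult_le_reg_r with (1 + a); [lra|]. field_simplify; lra.
  - intros y Ky.
    replace (a / (1 + a) * f y + (1 - a / (1 + a)) * g y)
      with ((a * f y + g y) / (1 + a)) by (field; lra).
    pose proof (Key y Ky). assert (0 < / (1 + a)) by (apply Rinv_0_lt_compat; lra).
    unfold Rdiv. nra.
Qed.
End TwoFunctions.

Definition wcomb {I} (h : I -> T -> R) (w : list (R * I)) (y : T) : R :=
  fold_right (fun p s => fst p * h (snd p) y + s) 0 w.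

Definition scale_weights {I} (c : R) (w : list (R * I)) : list (R * I) :=
  map (fun p => (c * fst p, snd p)) w.

Lemma wcomb_affine {I} (K : T -> Prop) (h : I -> T -> R) w :
  (forall p, In p w -> mix_affine K (h (snd p))) -> mix_affine K (wcomb h w).
Proof.
  induction w as [|p w IH]; intros Ha y z t Ky Kz Ht; simpl; [ring|].
  rewrite (Ha p (or_introl eq_refl) y z t Ky Kz Ht), IH; auto; [ring|].
  intros; apply Ha; right; auto.
Qed.

Lemma total_weight_scale {I} c (w : list (R * I)) :
  total_weight (scale_weights c w) = c * total_weight w.
Proof. induction w; simpl; [ring|]. rewrite IHw. ring. Qed.

Lemma wcomb_scale {I} (h : I -> T -> R) c w y :
  wcomb h (scale_weights c w) y = c * wcomb h w y.
Proof. induction w; simpl; [ring|]. rewrite IHw. ring. Qed.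

(** Induction on the family: on the convex part
    of [K] where [h i] is positive the remaining functions suffice, and
    [minimax_two] combines [h i] with the combination obtained there. *)
Lemma minimax_finite {I} (h : I -> T -> R) : forall L, L <> [] ->
  forall K, mix_convex K -> (forall i, In i L -> mix_affine K (h i)) ->
  (forall y, K y -> exists i, In i L /\ h i y <= 0) ->
  exists w, map snd w = L /\ Forall (fun p => 0 <= fst p) w /\ total_weight w = 1 /\
    forall y, K y -> wcomb h w y <= 0.
Proof.
  induction L as [|i L IH]; intros Hne K HK Ha Hc; [congruence|].
  destruct (classic (L = [])) as [->|HL].
  - exists [(1, i)]. split; [reflexivity|split; [repeat constructor; simpl; lra|split]].
    + simpl; ring.
    + intros y Ky. destruct (Hc y Ky) as [i' [[<-|[]] Hi]]. simpl. lra.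
  - set (K' := fun y => K y /\ h i y > 0).
    assert (HK' : mix_convex K').
    { intros y z t [Ky Hy] [Kz Hz] Ht; split; [apply HK; auto|].
      rewrite (Ha i (or_introl eq_refl) y z t Ky Kz Ht).
      destruct (Rlt_dec 0 t); [nra|]. replace t with 0 by lra. lra. }
    destruct (IH HL K' HK') as [w' [Hmap [Hnn [Hsum Hneg]]]].
    { intros j Hj y z t [Ky _] [Kz _] Ht. apply Ha; auto. right; auto. }
    { intros y [Ky Hy]. destruct (Hc y Ky) as [i' [[<-|Hi'] Hi]]; [lra|eauto]. }
    assert (Ag : mix_affine K (wcomb h w')).
    { apply wcomb_affine. intros p Hp. apply Ha. right. rewrite <- Hmap. apply in_map; auto. }
    destruct (minimax_two K (h i) (wcomb h w') HK (Ha i (or_introl eq_refl)) Ag)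
      as [t [Ht Hb]].
    { intros y Ky. destruct (Rle_dec (h i y) 0); [left; auto|right; apply Hneg; split; auto; lra]. }
    exists ((t, i) :: scale_weights (1 - t) w'). split; [|split; [|split]].
    + simpl. f_equal. unfold scale_weights. rewrite map_map. exact Hmap.
    + constructor; [simpl; lra|]. apply Forall_map. eapply Forall_impl; [|exact Hnn].
      simpl; intros; apply Rmult_le_pos; lra.
    + simpl. rewrite total_weight_scale, Hsum. ring.
    + intros y Ky. simpl. rewrite wcomb_scale. apply Hb; auto.
Qed.
End Minimax.

Section SetFunctions.
Context {Omega : Type}.
Implicit Types B C D E X Y : Omega -> Prop.

Lemma set_ext B C : (forall x, B x <-> C x) -> B = C.
Proof.
  intros H; apply functional_extensionality; intros x.
  apply propositional_extensionality; apply H.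
Qed.

Definition empty : Omega -> Prop := fun _ => False.
Definition full : Omega -> Prop := fun _ => True.
Definition inter B C : Omega -> Prop := fun x => B x /\ C x.
Definition union B C : Omega -> Prop := fun x => B x \/ C x.

Lemma compl_full : compl full = empty.
Proof. apply set_ext; unfold compl, full, empty; tauto. Qed.

Lemma split_along B C : C = union (inter B C) (inter (compl B) C).
Proof.
  apply set_ext; intros x; unfold union, inter, compl.
  destruct (classic (B x)); tauto.
Qed.

Variable A : (Omega -> Prop) -> Prop.
Hypothesis HA : is_algebra A.

Lemma A_empty : A empty. Proof. apply HA. Qed.
Lemma A_compl B : A B -> A (compl B). Proof. apply HA. Qed.
Lemma A_union B C : A B -> A C -> A (union B C). Proof. apply HA. Qed.

Lemma A_full : A full.
Proof.
  replace full with (compl empty); [apply A_compl, A_empty|].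
  apply set_ext; unfold compl, empty, full; tauto.
Qed.

Lemma A_inter B C : A B -> A C -> A (inter B C).
Proof.
  intros HB HC. replace (inter B C) with (compl (union (compl B) (compl C))).
  - apply A_compl, A_union; apply A_compl; auto.
  - apply set_ext; intros x; unfold compl, union, inter.
    destruct (classic (B x)); destruct (classic (C x)); tauto.
Qed.

Lemma ba_empty mu : is_ba A mu -> mu empty = 0.
Proof.
  intros [_ [Hadd _]].
  assert (H := Hadd empty empty A_empty A_empty (fun x h => proj1 h)).
  change (mu (union empty empty) = mu empty + mu empty) in H.
  replace (union empty empty) with empty in H; [lra|].
  apply set_ext; unfold union, empty; tauto.
Qed.

(** ** Contents: nonnegative finitely additive set functions on [A]. *)

Definition is_content (nu : (Omega -> Prop) -> R) : Prop :=
  (forall X, A X -> 0 <= nu X) /\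
  (forall X Y, A X -> A Y -> disj X Y -> nu (union X Y) = nu X + nu Y).

Section Content.
Variable nu : (Omega -> Prop) -> R.
Hypothesis Hnu : is_content nu.

Lemma content_empty : nu empty = 0.
Proof.
  destruct Hnu as [Hpos Hadd].
  assert (H := Hadd _ _ A_empty A_empty (fun x h => proj1 h)).
  replace (union empty empty) with empty in H; [lra|].
  apply set_ext; unfold union, empty; tauto.
Qed.

Lemma content_split B C : A B -> A C -> nu C = nu (inter B C) + nu (inter (compl B) C).
Proof.
  intros HB HC. rewrite (split_along B C) at 1. apply Hnu.
  - apply A_inter; auto.
  - apply A_inter; auto; apply A_compl; auto.
  - intros x [[Bx _] [nBx _]]; auto.
Qed.

Lemma content_mono X Y : A X -> A Y -> (forall x, X x -> Y x) -> nu X <= nu Y.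
Proof.
  intros HX HY Hs. rewrite (content_split X Y HX HY).
  replace (inter X Y) with X by (apply set_ext; unfold inter; firstorder).
  pose proof (proj1 Hnu _ (A_inter _ _ (A_compl _ HX) HY)). lra.
Qed.

(** Restricting a content to a set of [A] gives again a content; this is how
    the Chebyshev inequality below is proved by induction. *)
Lemma content_restrict E : A E -> is_content (fun X => nu (inter E X)).
Proof.
  intros HE. destruct Hnu as [Hpos Hadd]. split.
  - intros X HX; apply Hpos, A_inter; auto.
  - intros X Y HX HY Hd.
    replace (inter E (union X Y)) with (union (inter E X) (inter E Y))
      by (apply set_ext; unfold union, inter; tauto).
    apply Hadd; try (apply A_inter; auto).
    intros x [[_ Xx] [_ Yx]]; apply (Hd x); auto.
Qed.
End Content.

Lemma ba_pos_content mu : is_ba_pos A mu -> is_content mu.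
Proof. intros [[_ [Hadd _]] Hpos]. split; auto. Qed.

Definition sumv (mu : (Omega -> Prop) -> R) (l : list (Omega -> Prop)) : R :=
  fold_right (fun C s => mu C + s) 0 l.
Definition psum (mu : (Omega -> Prop) -> R) (l : list (Omega -> Prop)) : R :=
  fold_right (fun C s => Rabs (mu C) + s) 0 l.
Definition covered (l : list (Omega -> Prop)) : Omega -> Prop :=
  fun x => exists C, In C l /\ C x.

Lemma partition_sum : forall l X, is_A_partition A X l ->
  A X /\ forall mu, is_ba A mu -> mu X = sumv mu l.
Proof.
  induction l as [|C l IH]; intros X [Hf [Hd Hc]].
  - replace X with empty.
    + split; [apply A_empty|]. intros mu Hmu; apply (ba_empty mu Hmu).
    + apply set_ext; intros x; rewrite Hc; unfold empty. firstorder.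
  - inversion Hd; subst.
    destruct (IH (covered l)) as [HAl Hs].
    { split; [intros D HD; apply Hf; right; auto|split; [auto|]]. unfold covered; tauto. }
    assert (HX : X = union C (covered l)).
    { apply set_ext; intros x; rewrite Hc; unfold union, covered; simpl; firstorder.
      subst; auto. }
    assert (HAC : A C) by (apply Hf; left; auto).
    assert (Hdj : disj C (covered l)).
    { intros x [Cx [D [HD Dx]]]. rewrite Forall_forall in H1. apply (H1 D HD x); auto. }
    subst X. split; [apply A_union; auto|].
    intros mu Hmu. unfold union. rewrite (proj1 (proj2 Hmu)); auto.
    simpl. rewrite (Hs mu Hmu). reflexivity.
Qed.

Lemma partition_single X : A X -> is_A_partition A X [X].
Proof.
  intros HX. split; [intros C [<-|[]]; auto|split].
  - repeat constructor.
  - intros x; simpl; firstorder. subst; auto.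
Qed.

Definition partition_sums (mu : (Omega -> Prop) -> R) X : R -> Prop :=
  fun r => exists l, is_A_partition A X l /\ r = psum mu l.

Lemma psum_nonneg mu l : 0 <= psum mu l.
Proof. induction l; simpl; [lra|]. pose proof (Rabs_pos (mu a)); lra. Qed.

Lemma psum_app mu l1 l2 : psum mu (l1 ++ l2) = psum mu l1 + psum mu l2.
Proof. induction l1; simpl; [ring|]. rewrite IHl1; ring. Qed.

Section TotalVariation.
Variable lam : (Omega -> Prop) -> R.
Hypothesis Hlam : is_ba A lam.

(** Grouping the pieces where [lam] is nonnegative, resp. negative, writes
    [psum lam l] as a difference [lam P - lam N] of two sets of [A]. *)
Lemma psum_as_difference : forall l, Forall A l -> ForallOrdPairs disj l ->
  exists P N, A P /\ A N /\ (forall x, P x -> covered l x) /\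
    (forall x, N x -> covered l x) /\ psum lam l = lam P - lam N.
Proof.
  induction l as [|C l IH]; intros HF Hd.
  - exists empty, empty. repeat split; try apply A_empty; try (intros x []).
    simpl. rewrite (ba_empty lam Hlam); ring.
  - inversion HF as [|? ? HC HFl]; inversion Hd as [|? ? HdC Hdl]; subst.
    destruct (IH HFl Hdl) as [P [N [HP [HN [SP [SN E]]]]]].
    assert (Hdisj : forall Z, (forall x, Z x -> covered l x) -> disj C Z).
    { intros Z HZ x [Cx Zx]. destruct (HZ x Zx) as [D [HD Dx]].
      rewrite Forall_forall in HdC. exact (HdC D HD x (conj Cx Dx)). }
    assert (Hcov : forall Z, (forall x, Z x -> covered l x) ->
              forall x, union C Z x -> covered (C :: l) x).
    { intros Z HZ x [Cx|Zx]; [exists C; simpl; auto|].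
      destruct (HZ x Zx) as [D [HD Dx]]; exists D; simpl; auto. }
    assert (Hl : forall Z, (forall x, Z x -> covered l x) ->
              forall x, Z x -> covered (C :: l) x).
    { intros Z HZ x Zx; apply (Hcov Z HZ); right; auto. }
    destruct Hlam as [_ [Hadd _]].
    simpl; rewrite E. destruct (Rle_dec 0 (lam C)).
    + exists (union C P), N.
      split; [apply A_union; auto|split; [auto|split; [apply Hcov; auto|split; [apply Hl; auto|]]]].
      unfold union; rewrite Hadd, Rabs_right by (auto; lra). ring.
    + exists P, (union C N).
      split; [auto|split; [apply A_union; auto|split; [apply Hl; auto|split; [apply Hcov; auto|]]]].
      unfold union; rewrite Hadd, Rabs_left by (auto; lra). ring.
Qed.

Lemma partition_sums_bounded : exists b, forall X r, partition_sums lam X r -> r <= b.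
Proof.
  destruct Hlam as [_ [_ [K HK]]]. exists (2 * K). intros X r [l [[Hf [Hd _]] ->]].
  destruct (psum_as_difference l) as [P [N [HP [HN [_ [_ ->]]]]]]; auto.
  { rewrite Forall_forall; auto. }
  pose proof (HK P HP). pose proof (HK N HN).
  pose proof (Rle_abs (lam P)). pose proof (Rle_abs (- lam N)).
  rewrite Rabs_Ropp in *. lra.
Qed.

Lemma tv_lub X : A X -> is_lub (partition_sums lam X) (tv A lam X).
Proof.
  intros HX. change (is_lub (partition_sums lam X) (Rsup (partition_sums lam X))).
  apply Rsup_lub.
  - exists (psum lam [X]), [X]; split; auto. apply partition_single; auto.
  - destruct partition_sums_bounded as [b Hb]. exists b. intros r Hr; eauto.
Qed.

Lemma tv_nonneg X : A X -> 0 <= tv A lam X.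
Proof.
  intros HX. apply Rle_trans with (psum lam [X]); [apply psum_nonneg|].
  apply (tv_lub X HX). exists [X]; split; auto. apply partition_single; auto.
Qed.

(** Joining partitions of disjoint [X] and [Y] gives a partition of [X u Y]. *)
Lemma tv_superadditive X Y : A X -> A Y -> disj X Y ->
  tv A lam X + tv A lam Y <= tv A lam (union X Y).
Proof.
  intros HX HY Hd. pose proof (tv_lub _ (A_union _ _ HX HY)) as [U _].
  assert (Hjoin : forall r1 r2, partition_sums lam X r1 -> partition_sums lam Y r2 ->
            r1 + r2 <= tv A lam (union X Y)).
  { intros r1 r2 [l1 [[F1 [D1 C1]] ->]] [l2 [[F2 [D2 C2]] ->]].
    rewrite <- psum_app. apply U. exists (l1 ++ l2); split; auto. split; [|split].
    - intros C HC; apply in_app_or in HC; destruct HC; auto.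
    - apply ForallOrdPairs_app; auto. intros a b Ha Hb x [ax bx].
      apply (Hd x); split; [apply C1|apply C2]; eauto.
    - intros x; unfold union; rewrite C1, C2. split.
      + intros [[C [HC Cx]]|[C [HC Cx]]]; exists C; split; auto; apply in_or_app; auto.
      + intros [C [HC Cx]]; apply in_app_or in HC; destruct HC; [left|right]; eauto. }
  assert (H2 : forall r2, partition_sums lam Y r2 -> tv A lam X <= tv A lam (union X Y) - r2).
  { intros r2 Hr2. apply (tv_lub X HX). intros r1 Hr1. specialize (Hjoin r1 r2 Hr1 Hr2); lra. }
  assert (tv A lam Y <= tv A lam (union X Y) - tv A lam X).
  { apply (tv_lub Y HY). intros r2 Hr2. specialize (H2 r2 Hr2). lra. }
  lra.
Qed.

Lemma partition_restrict W Z l : is_A_partition A W l -> A Z ->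
  (forall x, Z x -> W x) -> is_A_partition A Z (map (inter Z) l).
Proof.
  intros [F [D Cv]] HZ HZW. split; [|split].
  - intros C' HC'. apply in_map_iff in HC'. destruct HC' as [C [<- HC]]. apply A_inter; auto.
  - apply ForallOrdPairs_map; auto. intros a b Hab x [[_ ax] [_ bx]]. apply (Hab x); auto.
  - intros x; split.
    + intros Zx. destruct (proj1 (Cv x) (HZW x Zx)) as [C [HC Cx]].
      exists (inter Z C); split; [apply in_map; auto|split; auto].
    + intros [C' [HC' C'x]]. apply in_map_iff in HC'. destruct HC' as [C [<- _]]. apply C'x.
Qed.

Lemma psum_split X Y l : A X -> A Y -> disj X Y -> Forall A l ->
  (forall C, In C l -> forall x, C x -> union X Y x) ->
  psum lam l <= psum lam (map (inter X) l) + psum lam (map (inter Y) l).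
Proof.
  intros HX HY Hd. induction l as [|C l IH]; intros HF Hs; simpl; [lra|].
  inversion HF as [|? ? HC HFl]; subst.
  assert (E : C = union (inter X C) (inter Y C)).
  { apply set_ext; intros x; unfold union, inter; split; [|tauto].
    intros Cx; destruct (Hs C (or_introl eq_refl) x Cx); tauto. }
  assert (Hsum : lam C = lam (inter X C) + lam (inter Y C)).
  { rewrite E at 1. apply Hlam; try (apply A_inter; auto).
    intros x [[Xx _] [Yx _]]; apply (Hd x); auto. }
  pose proof (Rabs_triang (lam (inter X C)) (lam (inter Y C))).
  assert (psum lam l <= psum lam (map (inter X) l) + psum lam (map (inter Y) l)).
  { apply IH; auto. intros; eapply Hs; [right|]; eauto. }
  rewrite <- Hsum in *. lra.
Qed.

Lemma tv_subadditive X Y : A X -> A Y -> disj X Y ->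
  tv A lam (union X Y) <= tv A lam X + tv A lam Y.
Proof.
  intros HX HY Hd. apply (tv_lub _ (A_union _ _ HX HY)). intros r [l [Pl ->]].
  assert (PX := partition_restrict _ X l Pl HX (fun x h => or_introl h)).
  assert (PY := partition_restrict _ Y l Pl HY (fun x h => or_intror h)).
  assert (Hle : psum lam l <= psum lam (map (inter X) l) + psum lam (map (inter Y) l)).
  { destruct Pl as [F [_ Cv]]. apply psum_split; auto.
    - rewrite Forall_forall; auto.
    - intros C HC x Cx; apply Cv; eauto. }
  assert (psum lam (map (inter X) l) <= tv A lam X) by (apply (tv_lub X HX); eexists; eauto).
  assert (psum lam (map (inter Y) l) <= tv A lam Y) by (apply (tv_lub Y HY); eexists; eauto).
  lra.
Qed.

Lemma tv_content : is_content (tv A lam).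
Proof.
  split; [exact tv_nonneg|]. intros X Y HX HY Hd.
  apply Rle_antisym; [apply tv_subadditive|apply tv_superadditive]; auto.
Qed.
End TotalVariation.

Lemma tv_ba_pos mu X : is_ba_pos A mu -> A X -> tv A mu X = mu X.
Proof.
  intros [Hb Hp] HX.
  assert (L : is_lub (partition_sums mu X) (mu X)).
  { split.
    - intros r [l [Pl ->]]. right.
      destruct (partition_sum l X Pl) as [_ ->]; auto.
      destruct Pl as [F _]. clear -F Hp. induction l as [|C l IH]; simpl; auto.
      rewrite Rabs_right by (apply Rle_ge, Hp, F; left; auto).
      rewrite IH; auto. intros; apply F; right; auto.
    - intros b Hb'. apply Hb'. exists [X]; split; [apply partition_single; auto|]. simpl.
      rewrite Rabs_right; [ring|apply Rle_ge, Hp; auto]. }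
  change (Rsup (partition_sums mu X) = mu X).
  destruct (Rsup_cases (partition_sums mu X)) as [H|[Hn _]].
  - apply Rle_antisym; [apply H, L|apply L, H].
  - exfalso; apply Hn; eauto.
Qed.
(** ** Weighted families of sets, level sets and a Chebyshev inequality *)

(** A weighted family [w] lists pairs (weight, set).  [level_set th w] is the
    set of points at which the sets of [w] containing them have total weight
    at least [th]. *)
Fixpoint level_set (th : R) (w : list (R * (Omega -> Prop))) : Omega -> Prop :=
  match w with
  | [] => fun _ => th <= 0
  | (p, B) :: w' => fun x => (B x /\ level_set (th - p) w' x) \/ (~ B x /\ level_set th w' x)
  end.

Definition weighted_mass (nu : (Omega -> Prop) -> R) (w : list (R * (Omega -> Prop))) : R :=
  fold_right (fun pB s => fst pB * nu (snd pB) + s) 0 w.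

Definition compl_weights (w : list (R * (Omega -> Prop))) : list (R * (Omega -> Prop)) :=
  map (fun pB => (fst pB, compl (snd pB))) w.

Definition weights_in (w : list (R * (Omega -> Prop))) : Prop :=
  Forall (fun pB => 0 <= fst pB /\ A (snd pB)) w.

Lemma weights_in_compl w : weights_in w -> weights_in (compl_weights w).
Proof.
  intros Hw. apply Forall_map. eapply Forall_impl; [|exact Hw].
  simpl; intros pB [Hp HB]; split; auto; apply A_compl; auto.
Qed.

Lemma level_set_A : forall w, weights_in w -> forall th, A (level_set th w).
Proof.
  induction w as [|[p B] w IH]; intros Hw th; simpl.
  - destruct (Rle_dec th 0).
    + replace (fun _ : Omega => th <= 0) with full; [apply A_full|].
      apply set_ext; unfold full; tauto.
    + replace (fun _ : Omega => th <= 0) with empty; [apply A_empty|].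
      apply set_ext; unfold empty; intuition.
  - inversion Hw as [|? ? [_ HB] Hw']; subst.
    exact (A_union _ _ (A_inter _ _ HB (IH Hw' _)) (A_inter _ _ (A_compl _ HB) (IH Hw' _))).
Qed.

Lemma level_set_compl : forall w th x,
  ~ level_set th w x -> level_set (total_weight w - th) (compl_weights w) x.
Proof.
  induction w as [|[p B] w IH]; intros th x Hn; simpl in *.
  - lra.
  - unfold compl. destruct (classic (B x)) as [Bx|nBx].
    + right. split; [tauto|].
      replace (p + total_weight w - th) with (total_weight w - (th - p)) by ring.
      apply IH. tauto.
    + left. split; [auto|].
      replace (p + total_weight w - th - p) with (total_weight w - th) by ring.
      apply IH. tauto.
Qed.

Lemma weighted_mass_nonneg nu w : is_content nu -> weights_in w -> 0 <= weighted_mass nu w.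
Proof.
  intros Hnu; induction w as [|[p B] w IH]; intros Hw; simpl; [lra|].
  inversion Hw as [|? ? [Hp HB] Hw']; subst.
  pose proof (proj1 Hnu B HB). specialize (IH Hw'). simpl in *. nra.
Qed.

Lemma weighted_mass_split nu B w : is_content nu -> A B -> weights_in w ->
  weighted_mass nu w =
  weighted_mass (fun X => nu (inter B X)) w + weighted_mass (fun X => nu (inter (compl B) X)) w.
Proof.
  intros Hnu HB; induction w as [|[p C] w IH]; intros Hw; simpl; [ring|].
  inversion Hw as [|? ? [_ HC] Hw']; subst.
  rewrite (content_split nu Hnu B C), IH; auto. ring.
Qed.

Lemma chebyshev : forall w, weights_in w -> forall nu th, is_content nu -> 0 < th ->
  th * nu (level_set th w) <= weighted_mass nu w.
Proof.
  induction w as [|[p B] w IH]; intros Hw nu th Hnu Hth; simpl.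
  - replace (fun _ : Omega => th <= 0) with empty.
    + rewrite (content_empty nu Hnu). lra.
    + apply set_ext; unfold empty; intros x; split; [tauto|lra].
  - inversion Hw as [|? ? [Hp HB] Hw']; simpl in Hp, HB; subst.
    set (L1 := level_set (th - p) w). set (L2 := level_set th w).
    assert (HL1 : A L1) by (apply level_set_A; auto).
    assert (HL2 : A L2) by (apply level_set_A; auto).
    change (th * nu (union (inter B L1) (inter (compl B) L2)) <=
            p * nu B + weighted_mass nu w).
    assert (HnuB := content_restrict nu Hnu B HB).
    assert (HnuBc := content_restrict nu Hnu (compl B) (A_compl _ HB)).
    rewrite (proj2 Hnu), (weighted_mass_split nu B w Hnu HB Hw');
      try (apply A_inter; auto using A_compl).
    2:{ intros x [[Bx _] [nBx _]]; auto. }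
    assert (I2 := IH Hw' _ th HnuBc Hth).
    assert (Mono : nu (inter B L1) <= nu B)
      by (apply content_mono; auto; [apply A_inter; auto|intros x [? _]; auto]).
    assert (N1 := proj1 Hnu _ (A_inter _ _ HB HL1)).
    assert (W1 := weighted_mass_nonneg _ w HnuB Hw').
    destruct (Rlt_dec 0 (th - p)) as [Hpos|Hneg].
    + assert (I1 := IH Hw' _ (th - p) HnuB Hpos). fold L1 L2 in I1, I2. simpl in I1, I2. nra.
    + fold L2 in I2. simpl in I2. nra.
Qed.

Lemma half_level_bounds w nu : weights_in w -> total_weight w = 1 -> is_content nu ->
  nu (level_set (1/2) w) <= 2 * weighted_mass nu w /\
  nu (compl (level_set (1/2) w)) <= 2 * weighted_mass nu (compl_weights w).
Proof.
  intros Hw Hsum Hnu.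
  pose proof (chebyshev w Hw nu (1/2) Hnu ltac:(lra)).
  pose proof (chebyshev _ (weights_in_compl w Hw) nu (1/2) Hnu ltac:(lra)).
  assert (nu (compl (level_set (1/2) w)) <= nu (level_set (1/2) (compl_weights w))).
  { apply content_mono; auto using A_compl, level_set_A, weights_in_compl.
    intros x Hx. replace (1/2) with (total_weight w - 1/2) by lra.
    apply level_set_compl; exact Hx. }
  split; lra.
Qed.
End SetFunctions.

(** ** Weak* compactness and the theorem *)

Section UniformSingularity.
Context {Omega : Type}.
Variable A : (Omega -> Prop) -> Prop.
Hypothesis HA : is_algebra A.

Lemma weak_open_lt B c : A B -> weak_open A (fun nu => nu B < c).
Proof.
  intros HB mu _ Hlt. exists [[(1, B)]], (c - mu B). split; [lra|split].
  - intros f [<-|[]] p [<-|[]]. exact HB.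
  - intros nu _ Hf. specialize (Hf _ (or_introl eq_refl)).
    unfold integral in Hf; simpl in Hf. apply Rabs_def2 in Hf. lra.
Qed.

(** Weak* compact sets are bounded: finitely many of the open sets
    [{nu | nu full < n}] cover them. *)
Lemma weak_compact_bounded M : weak_compact A M -> exists b, forall nu, M nu -> nu full <= b.
Proof.
  intros [_ Hcov]. destruct (Hcov nat (fun n nu => nu full < INR n)) as [l Hl].
  - intros n; apply weak_open_lt, A_full; auto.
  - intros mu _. destruct (INR_archimed 1 (mu full)) as [n Hn]; [lra|].
    exists n. lra.
  - exists (INR (list_max l)). intros nu Hnu. destruct (Hl nu Hnu) as [n [Hn Hlt]].
    assert (Hmax : (n <= list_max l)%nat).
    { pose proof (proj1 (list_max_le l (list_max l)) (le_n _)) as H.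
      rewrite Forall_forall in H; auto. }
    apply le_INR in Hmax. lra.
Qed.

(** The expression minimised in the minimax step, for a weighted family. *)
Lemma wcomb_separation (f nu : (Omega -> Prop) -> R) e w :
  wcomb _ (fun B (nu : (Omega -> Prop) -> R) => nu B + f (compl B) - e) w nu =
  weighted_mass nu w + weighted_mass f (compl_weights w) - e * total_weight w.
Proof. induction w as [|[p B] w IH]; simpl; [ring|]. rewrite IH. ring. Qed.

Variable lam : (Omega -> Prop) -> R.
Hypothesis Hlam : is_ba A lam.
Variable M : ((Omega -> Prop) -> R) -> Prop.
Hypothesis HMpos : forall mu, M mu -> is_ba_pos A mu.
Hypothesis HMconv : convex M.
Hypothesis HMcpt : weak_compact A M.

Definition sup_tv (B : Omega -> Prop) : R := Rsup (fun r => exists mu, M mu /\ r = tv A mu B).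

Lemma tv_le_sup_tv mu B : M mu -> A B -> tv A mu B <= sup_tv B.
Proof.
  intros Hmu HB. apply Rsup_ge; [exists mu; auto|].
  destruct (weak_compact_bounded M HMcpt) as [b Hb]. exists b.
  intros r [nu [Hnu ->]]. pose proof (Hb nu Hnu).
  rewrite tv_ba_pos; auto. apply Rle_trans with (nu full); auto.
  apply (content_mono A HA nu (ba_pos_content A nu (HMpos nu Hnu))); auto.
  - apply A_full; exact HA.
  - intros; exact I.
Qed.

Lemma separating_cover e : 0 < e -> (forall mu, M mu -> perp A mu lam) ->
  exists L, Forall A L /\
    forall nu, M nu -> exists B, In B L /\ nu B + tv A lam (compl B) < e.
Proof.
  intros He Hp. destruct HMcpt as [_ Hcov].
  destruct (Hcov {B | A B}
      (fun i nu => nu (proj1_sig i) < e - tv A lam (compl (proj1_sig i)))) as [l Hl].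
  - intros [B HB]; apply weak_open_lt; auto.
  - intros mu Hmu. destruct (Hp mu Hmu e He) as [B [HB Hlt]].
    exists (exist _ B HB). simpl. rewrite tv_ba_pos in Hlt; auto. lra.
  - exists (map (@proj1_sig _ _) l). split.
    + rewrite Forall_forall. intros B HB. apply in_map_iff in HB.
      destruct HB as [[B' HB'] [<- _]]. exact HB'.
    + intros nu Hnu. destruct (Hl nu Hnu) as [i [Hi Hlt]].
      exists (proj1_sig i). split; [apply in_map; auto|lra].
Qed.

Lemma uniform_separating_set e : 0 < e -> (forall mu, M mu -> perp A mu lam) ->
  exists D, A D /\ tv A lam (compl D) <= 2 * e /\
    forall nu, M nu -> nu D + tv A lam (compl D) <= 2 * e.
Proof.
  intros He Hp. assert (Htv := tv_content A HA lam Hlam).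
  destruct (classic (exists nu, M nu)) as [[nu0 Hnu0]|Hempty].
  2:{ exists full. split; [apply A_full; auto|].
      rewrite compl_full, (content_empty A HA _ Htv).
      split; [lra|]. intros nu Hnu; exfalso; eauto. }
  destruct (separating_cover e He Hp) as [L [HL Hcov]].
  destruct (minimax_finite _ (fun t mu nu B => t * mu B + (1 - t) * nu B)
              (fun B nu => nu B + tv A lam (compl B) - e) L) with (K := M)
    as [w [Hmap [Hnn [Hsum Hneg]]]].
  - intros ->. destruct (Hcov nu0 Hnu0) as [B [[] _]].
  - intros y z t Hy Hz Ht. apply HMconv; auto.
  - intros i _ y z t _ _ _. cbv beta. ring.
  - intros nu Hnu. destruct (Hcov nu Hnu) as [B [HB Hlt]]. exists B; split; auto; lra.
  - assert (Hw : weights_in A w).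
    { unfold weights_in. rewrite Forall_forall in *. intros pB HpB. split; auto.
      apply HL. rewrite <- Hmap. apply in_map; auto. }
    set (D := level_set (1/2) w).
    assert (Hlam' := proj2 (half_level_bounds A HA w _ Hw Hsum Htv)). fold D in Hlam'.
    assert (Key : forall nu, M nu -> nu D + tv A lam (compl D) <= 2 * e).
    { intros nu Hnu.
      assert (Hnu' := proj1 (half_level_bounds A HA w nu Hw Hsum (ba_pos_content A nu (HMpos nu Hnu)))).
      pose proof (Hneg nu Hnu) as Hn. rewrite wcomb_separation, Hsum in Hn.
      fold D in Hnu'. lra. }
    exists D. split; [apply level_set_A; auto|split; [|exact Key]].
    pose proof (Key nu0 Hnu0). pose proof (proj2 (HMpos nu0 Hnu0) D (level_set_A A HA w Hw _)).
    lra.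
Qed.
End UniformSingularity.

Theorem mainTheorem3 (Omega : Type) (A : (Omega -> Prop) -> Prop)
  (HA : is_algebra A)
  (lam : (Omega -> Prop) -> R) (Hlam : is_ba A lam)
  (M : ((Omega -> Prop) -> R) -> Prop)
  (HMpos : forall mu, M mu -> is_ba_pos A mu)
  (HMconv : convex M)
  (HMcpt : weak_compact A M) :
  (forall mu, M mu -> perp A mu lam) <-> perp_u A lam M.
Proof.
  split.
  - (* a set that separates uniformly up to eps/2 *)
    intros Hp eps Heps.
    destruct (uniform_separating_set A HA lam Hlam M HMpos HMconv HMcpt (eps / 4))
      as [D [HD [Hlam' HM]]]; [lra|exact Hp|].
    exists D. split; [exact HD|].
    assert (Rsup (fun r => exists mu, M mu /\ r = tv A mu D) <= eps / 2 - tv A lam (compl D)).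
    { apply Rsup_le; [|lra]. intros r [nu [Hnu ->]].
      rewrite tv_ba_pos; auto. specialize (HM nu Hnu). lra. }
    lra.
  -
    intros Hu mu Hmu eps Heps. destruct (Hu eps Heps) as [B [HB Hlt]].
    exists B. split; [exact HB|].
    pose proof (tv_le_sup_tv A HA M HMpos HMcpt mu B Hmu HB).
    pose proof (tv_nonneg A HA lam Hlam (compl B) (A_compl A HA B HB)).
    unfold sup_tv in *. lra.
Qed.
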